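(* Let $g(z)=\frac{1+z^2}{1-z-z^2}$ (the generating function of the modified Lucas numbers $1,1,3,4,7,11,\dots$) and $$f(z)=\frac{1-z-z^2-\sqrt{z^4+10z^3-13z^2-10z+1}}{4-2z},$$ where the square root is the formal power series with constant term $1$. Then $f(z)$ is a formal power series with $f(0)=0$ and $f'(0)\neq 0$, and the Riordan matrix $(g(z),f(z))$ is a pseudo-involution.
   Context: A Riordan matrix is a pair $(g(z),f(z))$ of formal power series over $\mathbb{C}$ with $g(z)=\sum_{n\ge 0} g_n z^n$, $g_0\neq 0$, and $f(z)=\sum_{n\ge 1} f_n z^n$ with $f_1\neq 0$; it represents the infinite lower-triangular matrix whose $k$-th column ($k\ge 0$) has generating function $g(z)f(z)^k$. Riordan matrices form a group under matrix multiplication, where $(g(z),f(z))*(h(z),l(z))=(g(z)h(f(z)),\,l(f(z)))$ and the identity is $(1,z)$. Let $M=(1,-z)$. A Riordan matrix $L$ is called a pseudo-involution if $(L*M)*(L*M)=(1,z)$. *)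

From HB Require Import structures.
From mathcomp Require Import all_boot all_order all_algebra all_field.
Set Implicit Arguments. Unset Strict Implicit. Unset Printing Implicit Defensive.
Import Order.TTheory GRing.Theory Num.Theory.
Local Open Scope ring_scope.

Definition fps := nat -> algC.

Definition ofseq (s : seq algC) : fps := fun n => nth 0 s n.
Definition fps1 : fps := ofseq [:: 1].
Definition fpsX : fps := ofseq [:: 0; 1].
Definition fps_opp (a : fps) : fps := fun n => - a n.
Definition fps_sub (a b : fps) : fps := fun n => a n - b n.

Definition fps_mul (a b : fps) : fps :=
  fun n => \sum_(i < n.+1) a i * b (n - i)%N.

Fixpoint fps_pow (a : fps) (k : nat) : fps :=
  match k with 0 => fps1 | k'.+1 => fps_mul a (fps_pow a k') end.

(* composition h(f(z)); meaningful when f 0 = 0 *)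
Definition fps_comp (h f : fps) : fps :=
  fun n => \sum_(k < n.+1) h k * fps_pow f k n.

Fixpoint inv_upto (a : fps) (n : nat) : seq algC :=
  match n with
  | 0 => [:: (a 0%N)^-1]
  | n'.+1 => let s := inv_upto a n' in
      rcons s (- (a 0%N)^-1 * \sum_(j < n'.+1) a j.+1 * nth 0 s (n' - j)%N)
  end.
Definition fps_inv (a : fps) : fps := fun n => nth 0 (inv_upto a n) n.
Definition fps_div (a b : fps) : fps := fps_mul a (fps_inv b).

Fixpoint sqrt_upto (p : fps) (n : nat) : seq algC :=
  match n with
  | 0 => [:: 1]
  | n'.+1 => let s := sqrt_upto p n' in
      rcons s ((p n'.+1 - \sum_(j < n') nth 0 s j.+1 * nth 0 s (n' - j)%N) / 2%:R)
  end.
Definition fps_sqrt1 (p : fps) : fps := fun n => nth 0 (sqrt_upto p n) n.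

Definition riordan := (fps * fps)%type.
Definition is_riordan (L : riordan) : Prop :=
  L.1 0%N != 0 /\ L.2 0%N = 0 /\ L.2 1%N != 0.
Definition rmul (L K : riordan) : riordan :=
  (fps_mul L.1 (fps_comp K.1 L.2), fps_comp K.2 L.2).
Definition rid : riordan := (fps1, fpsX).
Definition rM : riordan := (fps1, fps_opp fpsX).
Definition riordan_eq (L K : riordan) : Prop :=
  forall n, L.1 n = K.1 n /\ L.2 n = K.2 n.
Definition pseudo_involution (L : riordan) : Prop :=
  riordan_eq (rmul (rmul L rM) (rmul L rM)) rid.

Definition lucas_g : fps := fps_div (ofseq [:: 1; 0; 1]) (ofseq [:: 1; -1; -1]).
Definition disc : fps := ofseq [:: 1; -10%:R; -13%:R; 10%:R; 1].
Definition lucas_f : fps :=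
  fps_div (fps_sub (ofseq [:: 1; -1; -1]) (fps_sqrt1 disc)) (ofseq [:: 4%:R; -2%:R]).

From mathcomp Require Import all_boot all_order all_algebra all_field.
From mathcomp Require Import ring zify.
Import GRing.Theory Num.Theory.
Local Open Scope ring_scope.
Set Implicit Arguments. Unset Strict Implicit.

(* Writing P = 1 - z - z^2, A = 1 + z^2, W = 4 - 2z and D for the quartic
   under the square root, one has g = A / P and f = (P - sqrt D) / W, and
   (P - W y)^2 - D = 2 W Q(z, y) for the quadratic
       Q(x, y) = (2 - x) y^2 - P(x) y + x + 2 x^2.
   Hence Q(z, f) = 0.  Since Q(-y, -x) = Q(x, y), the series -z also solves
   Q(-f, y) = 0, and so does f(-f) (substitute z := -f); the curve Q has a
   single branch through the origin, so f(-f) = -z.  Moreover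
   A(x) A(-y) - P(x) P(-y) = Q(x, y), which yields g(z) g(-f) = 1.  These
   two identities say exactly that (g, f) * (1, -z) is an involution.

   All series identities are proved coefficientwise: a series is replaced by
   its truncation to degree < n, and identities hold between polynomials
   modulo X^n. *)

Definition eqmodX (R : fieldType) (n : nat) (p q : {poly R}) := 'X^n %| p - q.
Notation "p = q %[modX n ]" := (eqmodX n p q)
  (at level 70, q at next level, format "p  =  q  %[modX  n ]") : ring_scope.

Section CongruenceModXn.
Variables (R : fieldType) (n : nat).
Implicit Types p q r c : {poly R}.

Lemma eqmodXP p q : p = q %[modX n] <-> forall i, (i < n)%N -> p`_i = q`_i.
Proof.
split=> [/dvdpP [r hr] i hi | h].
  by apply/eqP; rewrite -subr_eq0 -coefB hr coefMXn hi.
apply/dvdpP; exists (\poly_(i < size (p - q)) (p - q)`_(i + n)).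
apply/polyP => i; rewrite coefMXn; case: ltnP => hi; first by rewrite coefB h ?subrr.
rewrite coef_poly subnK //; case: ltnP => // hs.
by rewrite nth_default //; apply: leq_trans hs (leq_subr _ _).
Qed.

Lemma eqmodX_refl p : p = p %[modX n].
Proof. by rewrite /eqmodX subrr dvdp0. Qed.

Lemma eqmodX_sym p q : p = q %[modX n] -> q = p %[modX n].
Proof. by rewrite /eqmodX -opprB dvdpNr. Qed.

Lemma eqmodX_trans q p r : p = q %[modX n] -> q = r %[modX n] -> p = r %[modX n].
Proof.
rewrite /eqmodX => hpq hqr.
have -> : p - r = (p - q) + (q - r) by rewrite addrA subrK.
exact: dvdp_add.
Qed.

Lemma eqmodX_add p q p' q' :
  p = p' %[modX n] -> q = q' %[modX n] -> p + q = p' + q' %[modX n].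
Proof. by rewrite /eqmodX opprD addrACA; apply: dvdp_add. Qed.

Lemma eqmodX_opp p q : p = q %[modX n] -> - p = - q %[modX n].
Proof. by rewrite /eqmodX -opprD dvdpNr. Qed.

Lemma eqmodX_mul p q p' q' :
  p = p' %[modX n] -> q = q' %[modX n] -> p * q = p' * q' %[modX n].
Proof.
rewrite /eqmodX => hp hq.
have -> : p * q - p' * q' = q * (p - p') + p' * (q - q') by ring.
by rewrite dvdp_add ?dvdp_mull.
Qed.

Lemma eqmodX_compr p q q' : q = q' %[modX n] -> p \Po q = p \Po q' %[modX n].
Proof.
move=> hq; elim/poly_ind: p => [|p c IH]; first by rewrite !comp_poly0 eqmodX_refl.
rewrite !comp_polyD !comp_polyM !comp_polyX !comp_polyC.
by apply: eqmodX_add; [apply: eqmodX_mul | apply: eqmodX_refl].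
Qed.

Lemma eqmodX_compl p p' q :
  p = p' %[modX n] -> q`_0 = 0 -> p \Po q = p' \Po q %[modX n].
Proof.
move=> /dvdpP [r hr] q0; rewrite /eqmodX -comp_polyB hr comp_polyM comp_Xn_poly.
apply/dvdp_mull/dvdp_exp2r.
have := dvdp_XsubCl q 0; rewrite polyC0 subr0 => ->.
by rewrite rootE horner_coef0 q0.
Qed.

(* Series with nonzero constant term are invertible, hence cancellable. *)
Lemma eqmodX_cancel c p q :
  p * c = q * c %[modX n] -> c`_0 != 0 -> p = q %[modX n].
Proof.
rewrite /eqmodX -mulrBl => h c0; rewrite -(Gauss_dvdpl _ (q := c)) //.
apply: coprimep_expl; rewrite coprimep_sym.
have := coprimep_XsubC c 0; rewrite polyC0 subr0 => ->.
by rewrite rootE horner_coef0.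
Qed.

End CongruenceModXn.

Lemma size_inv_upto (a : fps) n : size (inv_upto a n) = n.+1.
Proof. by elim: n => //= n IH; rewrite size_rcons IH. Qed.

Lemma nth_inv_upto (a : fps) n j : (j <= n)%N -> nth 0 (inv_upto a n) j = fps_inv a j.
Proof.
elim: n j => [|n IH] j; first by case: j.
rewrite leq_eqVlt => /orP [/eqP -> // | hj].
by rewrite /= nth_rcons size_inv_upto hj IH.
Qed.

Lemma fps_invS (a : fps) n :
  fps_inv a n.+1 = - (a 0%N)^-1 * \sum_(j < n.+1) a j.+1 * fps_inv a (n - j)%N.
Proof.
rewrite {1}/fps_inv /= nth_rcons size_inv_upto ltnn eqxx; congr (_ * _).
by apply: eq_bigr => j _; rewrite nth_inv_upto // leq_subr.
Qed.

Lemma fps_mulV (a : fps) n : a 0%N != 0 -> fps_mul a (fps_inv a) n = fps1 n.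
Proof.
move=> a0; case: n => [|n]; first by rewrite /fps_mul big_ord1 /fps_inv /= divff.
rewrite /fps_mul big_ord_recl subn0 fps_invS.
under [X in _ + X = _]eq_bigr => i _ do rewrite lift0 subSS.
by rewrite mulrA mulrN divff // mulN1r addNr; case: n.
Qed.

Lemma size_sqrt_upto (p : fps) n : size (sqrt_upto p n) = n.+1.
Proof. by elim: n => //= n IH; rewrite size_rcons IH. Qed.

Lemma nth_sqrt_upto (p : fps) n j :
  (j <= n)%N -> nth 0 (sqrt_upto p n) j = fps_sqrt1 p j.
Proof.
elim: n j => [|n IH] j; first by case: j.
rewrite leq_eqVlt => /orP [/eqP -> // | hj].
by rewrite /= nth_rcons size_sqrt_upto hj IH.
Qed.

Lemma fps_sqrtS (p : fps) n : fps_sqrt1 p n.+1 =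
  (p n.+1 - \sum_(j < n) fps_sqrt1 p j.+1 * fps_sqrt1 p (n - j)%N) / 2%:R.
Proof.
rewrite {1}/fps_sqrt1 /= nth_rcons size_sqrt_upto ltnn eqxx; congr ((_ - _) / _).
by apply: eq_bigr => j _; rewrite !nth_sqrt_upto // ?leq_subr //; apply: ltnW.
Qed.

Lemma fps_sqrt1K (p : fps) n : p 0%N = 1 ->
  fps_mul (fps_sqrt1 p) (fps_sqrt1 p) n = p n.
Proof.
move=> p0; case: n => [|n]; first by rewrite /fps_mul big_ord1 mulr1.
rewrite /fps_mul big_ord_recl subn0.
under [X in _ + X = _]eq_bigr => i _ do rewrite lift0 subSS.
rewrite big_ord_recr /= subnn mul1r mulr1 fps_sqrtS.
have two_neq0 : (2%:R : algC) != 0 by rewrite pnatr_eq0.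
by field.
Qed.

Lemma fps_pow_lt (f : fps) k i : f 0%N = 0 -> (i < k)%N -> fps_pow f k i = 0.
Proof.
move=> f0; elim: k i => [|k IH] i // hik.
rewrite /= /fps_mul big1 // => -[[|j] hj] _ /=; first by rewrite f0 mul0r.
by rewrite IH ?mulr0 //; lia.
Qed.

Definition fps_trunc (n : nat) (a : fps) : {poly algC} := \poly_(i < n) a i.

Section Truncation.
Variable n : nat.
Implicit Types a b h f : fps.

Lemma coef_trunc a i : (i < n)%N -> (fps_trunc n a)`_i = a i.
Proof. by move=> hi; rewrite coef_poly hi. Qed.

Lemma coef0_trunc a : a 0%N = 0 -> (fps_trunc n a)`_0 = 0.
Proof. by move=> a0; rewrite coef_poly; case: ifP. Qed.

Lemma eqmodX_trunc a b :
  fps_trunc n a = fps_trunc n b %[modX n] <-> forall i, (i < n)%N -> a i = b i.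
Proof.
rewrite eqmodXP; split=> h i hi; last by rewrite !coef_trunc ?h.
by have := h i hi; rewrite !coef_trunc.
Qed.

Lemma trunc_sub a b : fps_trunc n (fps_sub a b) = fps_trunc n a - fps_trunc n b.
Proof. by apply/polyP => i; rewrite coefB !coef_poly; case: ifP; rewrite ?subr0. Qed.

Lemma trunc_opp a : fps_trunc n (fps_opp a) = - fps_trunc n a.
Proof. by apply/polyP => i; rewrite coefN !coef_poly; case: ifP; rewrite ?oppr0. Qed.

Lemma trunc_mul a b :
  fps_trunc n (fps_mul a b) = fps_trunc n a * fps_trunc n b %[modX n].
Proof.
apply/eqmodXP => i hi; rewrite coef_trunc // coefM; apply: eq_bigr => j _.
by rewrite !coef_trunc // (leq_ltn_trans _ hi) ?leq_subr ?leq_ord.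
Qed.

Lemma trunc_ofseq s : fps_trunc n (ofseq s) = Poly s %[modX n].
Proof. by apply/eqmodXP => i hi; rewrite coef_trunc // coef_Poly. Qed.

Lemma trunc_one : fps_trunc n fps1 = 1 %[modX n].
Proof.
apply/eqmodXP => i hi; rewrite coef_trunc // coef1.
by case: i {hi} => [|[|i]].
Qed.

Lemma trunc_pow a k : fps_trunc n (fps_pow a k) = fps_trunc n a ^+ k %[modX n].
Proof.
elim: k => [|k IH]; first exact: trunc_one.
by rewrite exprS; apply: eqmodX_trans (trunc_mul _ _) (eqmodX_mul (eqmodX_refl _ _) IH).
Qed.

Lemma trunc_comp h f : f 0%N = 0 ->
  fps_trunc n (fps_comp h f) = fps_trunc n h \Po fps_trunc n f %[modX n].
Proof.
move=> f0; apply/eqmodXP => i hi; rewrite coef_trunc // coef_comp_poly /fps_comp.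
have hs : (size (fps_trunc n h) <= n)%N by apply: size_poly.
rewrite (big_ord_widen _ (fun k => (fps_trunc n h)`_k * (fps_trunc n f ^+ k)`_i) hs).
rewrite (big_ord_widen _ (fun k => h k * fps_pow f k i) hi).
rewrite big_mkcond [in RHS]big_mkcond; apply: eq_bigr => -[k hk] _ /=.
move/eqmodXP: (trunc_pow f k) => /(_ i hi) <-; rewrite (coef_trunc _ hi).
case: ifP => hki; case: ifP => hks //; first by rewrite coef_trunc.
  by rewrite -(coef_trunc h hk) nth_default ?mul0r // leqNgt hks.
by rewrite fps_pow_lt ?mulr0 // ltnNge -ltnS hki.
Qed.

Lemma trunc_inv a : a 0%N != 0 ->
  fps_trunc n a * fps_trunc n (fps_inv a) = 1 %[modX n].
Proof.
move=> a0; apply: eqmodX_trans (eqmodX_sym (trunc_mul _ _)) _.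
apply: eqmodX_trans trunc_one; apply/eqmodX_trunc => i _; exact: fps_mulV.
Qed.

Lemma trunc_sqrt p : p 0%N = 1 ->
  fps_trunc n (fps_sqrt1 p) ^+ 2 = fps_trunc n p %[modX n].
Proof.
move=> p0; apply: eqmodX_trans (eqmodX_sym (trunc_mul _ _)) _.
by apply/eqmodX_trunc => i _; exact: fps_sqrt1K.
Qed.

End Truncation.

Section LucasCurve.
Variable R : comNzRingType.
Implicit Types x y u z : R.

Definition lucasA x : R := 1 + x ^+ 2.
Definition lucasP x : R := 1 - x - x ^+ 2.
Definition lucasW x : R := 4 - 2 * x.
Definition lucasD x : R := 1 - 10 * x - 13 * x ^+ 2 + 10 * x ^+ 3 + x ^+ 4.
Definition lucas_curve x y : R := (2 - x) * y ^+ 2 - lucasP x * y + x + 2 * x ^+ 2.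

Lemma lucas_curve_sym x y : lucas_curve (- y) (- x) = lucas_curve x y.
Proof. rewrite /lucas_curve /lucasP; ring. Qed.

(* Completing the square: y = (P - sqrt D) / W is a root of Q(x, .). *)
Lemma lucas_curve_discr x y :
  (lucasP x - lucasW x * y) ^+ 2 - lucasD x = lucas_curve x y * (2 * lucasW x).
Proof. rewrite /lucas_curve /lucasP /lucasW /lucasD; ring. Qed.

Lemma lucas_curve_AP x y :
  lucasA x * lucasA (- y) - lucasP x * lucasP (- y) = lucas_curve x y.
Proof. rewrite /lucas_curve /lucasA /lucasP; ring. Qed.

Lemma lucas_curveB u y z :
  lucas_curve u y - lucas_curve u z = (y - z) * ((2 - u) * (y + z) - lucasP u).
Proof. rewrite /lucas_curve /lucasP; ring. Qed.

End LucasCurve.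

Section LucasCurveComp.
Variables (R : comNzRingType) (w : {poly R}).
Implicit Types p q : {poly R}.

Lemma comp_lucasA p : lucasA p \Po w = lucasA (p \Po w).
Proof. by rewrite /lucasA rmorphD rmorph1 rmorphXn. Qed.

Lemma comp_lucasP p : lucasP p \Po w = lucasP (p \Po w).
Proof. by rewrite /lucasP !rmorphB rmorph1 rmorphXn. Qed.

Lemma comp_lucas_curve p q :
  lucas_curve p q \Po w = lucas_curve (p \Po w) (q \Po w).
Proof.
by rewrite /lucas_curve /lucasP
  !(rmorph_nat, rmorphD, rmorphN, rmorphB, rmorphM, rmorphXn, rmorph1).
Qed.

End LucasCurveComp.

Lemma lucas_curve_branch (R : fieldType) n (u y z : {poly R}) :
  u`_0 = 0 -> y`_0 = 0 -> z`_0 = 0 ->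
  lucas_curve u y = 0 %[modX n] -> lucas_curve u z = 0 %[modX n] ->
  y = z %[modX n].
Proof.
move=> u0 y0 z0 hy hz.
apply: (eqmodX_cancel (c := (2 - u) * (y + z) - lucasP u)).
  rewrite /eqmodX -mulrBl -lucas_curveB.
  by rewrite /eqmodX !subr0 in hy hz; apply: dvdp_sub.
rewrite -horner_coef0 /lucasP !hornerE !horner_coef0 u0 y0 z0.
by rewrite !(subr0, addr0, mulr0, expr0n) /= sub0r oppr_eq0 oner_eq0.
Qed.

Ltac poly_by_coefs :=
  apply/polyP => -[|[|[|[|[|[|i]]]]]]; rewrite coef_Poly ?mulr_natl !coefE /=; ring.

Lemma Poly_lucasA : Poly [:: 1; 0; 1] = lucasA ('X : {poly algC}).
Proof. rewrite /lucasA; poly_by_coefs. Qed.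

Lemma Poly_lucasP : Poly [:: 1; -1; -1] = lucasP ('X : {poly algC}).
Proof. rewrite /lucasP; poly_by_coefs. Qed.

Lemma Poly_lucasW : Poly [:: 4%:R; -2%:R] = lucasW ('X : {poly algC}).
Proof. rewrite /lucasW; poly_by_coefs. Qed.

Lemma Poly_lucasD : Poly [:: 1; -10%:R; -13%:R; 10%:R; 1] = lucasD ('X : {poly algC}).
Proof. rewrite /lucasD; poly_by_coefs. Qed.

Lemma lucas_f0 : lucas_f 0%N = 0.
Proof. by rewrite /lucas_f /fps_div /fps_mul big_ord1 /fps_sub subrr mul0r. Qed.

Section LucasTruncation.
Variable n : nat.
Local Notation F := (fps_trunc n lucas_f).
Local Notation G := (fps_trunc n lucas_g).
Local Notation S := (fps_trunc n (fps_sqrt1 disc)).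

Lemma trunc_lucas_f : lucasW 'X * F = lucasP 'X - S %[modX n].
Proof.
set I := fps_trunc n (fps_inv (ofseq [:: 4%:R; -2%:R])).
have hWI : lucasW 'X * I = 1 %[modX n].
  have W0 : ofseq [:: 4%:R; -2%:R] 0%N != 0 by rewrite /ofseq /= pnatr_eq0.
  apply: eqmodX_trans (trunc_inv n W0).
  by rewrite -Poly_lucasW; apply/eqmodX_mul/eqmodX_refl/eqmodX_sym/trunc_ofseq.
have hF : F = (lucasP 'X - S) * I %[modX n].
  apply: eqmodX_trans (trunc_mul _ _ _) _; rewrite trunc_sub -Poly_lucasP.
  exact/eqmodX_mul/eqmodX_refl/eqmodX_add/eqmodX_refl/trunc_ofseq.
apply: eqmodX_trans (eqmodX_mul (eqmodX_refl _ _) hF) _.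
by rewrite mulrCA -[X in _ = X %[modX n]]mulr1; apply/eqmodX_mul/hWI/eqmodX_refl.
Qed.

Lemma lucas_f_curve : lucas_curve 'X F = 0 %[modX n].
Proof.
apply: (eqmodX_cancel (c := 2 * lucasW 'X)); last first.
  by rewrite /lucasW !mulr_natl !coefE /= mul0rn subr0 -mulrnA pnatr_eq0.
have hS : lucasP 'X - lucasW 'X * F = S %[modX n].
  by rewrite -[S](subKr (lucasP 'X)); apply/eqmodX_add/eqmodX_opp/trunc_lucas_f/eqmodX_refl.
have hD : S ^+ 2 = lucasD 'X %[modX n].
  rewrite -Poly_lucasD; apply: eqmodX_trans (trunc_sqrt n _) (trunc_ofseq _ _) => //.
rewrite mul0r -lucas_curve_discr /eqmodX subr0.
by apply: eqmodX_trans hD; rewrite !expr2; apply: eqmodX_mul.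
Qed.

Lemma trunc_lucas_g : G * lucasP 'X = lucasA 'X %[modX n].
Proof.
set J := fps_trunc n (fps_inv (ofseq [:: 1; -1; -1])).
have hPJ : lucasP 'X * J = 1 %[modX n].
  have P0 : ofseq [:: 1; -1; -1] 0%N != 0 by rewrite /ofseq /= oner_eq0.
  apply: eqmodX_trans (trunc_inv n P0).
  by rewrite -Poly_lucasP; apply/eqmodX_mul/eqmodX_refl/eqmodX_sym/trunc_ofseq.
apply: eqmodX_trans (eqmodX_mul (trunc_mul _ _ _) (eqmodX_refl _ _)) _.
rewrite -mulrA [J * _]mulrC -Poly_lucasA -[X in _ = X %[modX n]]mulr1.
exact/eqmodX_mul/hPJ/trunc_ofseq.
Qed.

Lemma coef0_neg_lucas_f : (- F)`_0 = 0.
Proof. by rewrite coefN coef0_trunc ?lucas_f0 ?oppr0. Qed.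

(* f(-f) = -z: both sides lie on the branch of Q over -f. *)
Lemma lucas_f_involution : F \Po (- F) = - 'X %[modX n].
Proof.
have w0 := coef0_neg_lucas_f.
apply: (lucas_curve_branch (u := - F)) => //.
- by rewrite -horner_coef0 horner_comp horner_coef0 w0 horner_coef0 coef0_trunc ?lucas_f0.
- by rewrite coefN coefX oppr0.
- have := eqmodX_compl lucas_f_curve w0.
  by rewrite comp_lucas_curve comp_polyX comp_poly0.
- by rewrite lucas_curve_sym; apply: lucas_f_curve.
Qed.

(* g(z) g(-f) = 1, since A(z) A(-f) - P(z) P(-f) = Q(z, f) = 0. *)
Lemma lucas_g_involution : G * (G \Po - F) = 1 %[modX n].
Proof.
have w0 := coef0_neg_lucas_f.
have hGw : (G \Po - F) * lucasP (- F) = lucasA (- F) %[modX n].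
  have := eqmodX_compl trunc_lucas_g w0.
  by rewrite comp_polyM comp_lucasP comp_lucasA comp_polyX.
apply: (eqmodX_cancel (c := lucasP 'X * lucasP (- F))); last first.
  rewrite -horner_coef0 hornerM /lucasP !hornerE horner_coef0 coef0_trunc ?lucas_f0 //.
  by rewrite oppr0 expr2 !mulr0 !subr0 mulr1 addr0 oner_eq0.
rewrite mul1r mulrACA; apply: eqmodX_trans (eqmodX_mul trunc_lucas_g hGw) _.
by rewrite /eqmodX lucas_curve_AP -[lucas_curve _ _]subr0; apply: lucas_f_curve.
Qed.

End LucasTruncation.

(* A Riordan pair (g, f) is a pseudo-involution as soon as, for every n,
   g(z) g(-f) = 1 and f(-f) = -z modulo z^n: these are the two components of
   ((g, f) * (1, -z))^2 = (1, z). *)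
Section PseudoInvolutionCriterion.
Variables (g f : fps).
Hypothesis f0 : f 0%N = 0.

Lemma rmulM_f0 : (rmul (g, f) rM).2 0%N = 0.
Proof. by rewrite /= /fps_comp big_ord1 /fps_opp /fpsX /ofseq /= oppr0 mul0r. Qed.

Lemma trunc_rmulM_g n : fps_trunc n (rmul (g, f) rM).1 = fps_trunc n g %[modX n].
Proof.
apply: eqmodX_trans (trunc_mul _ _ _) _.
rewrite -[X in _ = X %[modX n]]mulr1; apply: eqmodX_mul (eqmodX_refl _ _) _.
apply: eqmodX_trans (trunc_comp _ _ f0) _.
by have := eqmodX_compl (trunc_one n) (coef0_trunc n f0); rewrite rmorph1.
Qed.

Lemma trunc_rmulM_f n : fps_trunc n (rmul (g, f) rM).2 = - fps_trunc n f %[modX n].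
Proof.
apply: eqmodX_trans (trunc_comp _ _ f0) _.
have hX : fps_trunc n (fps_opp fpsX) = - 'X %[modX n].
  by rewrite trunc_opp -[X in _ = - X %[modX n]]polyseqK polyseqX; exact/eqmodX_opp/trunc_ofseq.
by have := eqmodX_compl hX (coef0_trunc n f0); rewrite rmorphN /= comp_polyX.
Qed.

Lemma pseudo_involution_trunc :
  (forall n, fps_trunc n g * (fps_trunc n g \Po - fps_trunc n f) = 1 %[modX n]) ->
  (forall n, fps_trunc n f \Po - fps_trunc n f = - 'X %[modX n]) ->
  pseudo_involution (g, f).
Proof.
move=> hg hf k; set n := k.+1; set LM := rmul (g, f) rM.
have negf0 : (- fps_trunc n f)`_0 = 0 by rewrite coefN coef0_trunc ?oppr0.
have hcomp h : fps_trunc n (fps_comp h LM.2) = fps_trunc n h \Po - fps_trunc n f %[modX n].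
  apply: eqmodX_trans (trunc_comp _ _ rmulM_f0) _; apply: eqmodX_compr.
  exact: trunc_rmulM_f.
have hX : fps_trunc n fpsX = 'X %[modX n].
  by rewrite -[X in _ = X %[modX n]]polyseqK polyseqX; apply: trunc_ofseq.
split; apply/(eqmodX_trunc n _ _).1 => //.
- apply: eqmodX_trans (trunc_mul _ _ _) _.
  apply: eqmodX_trans (eqmodX_sym (trunc_one n)).
  apply: eqmodX_trans (hg n); apply: eqmodX_mul (trunc_rmulM_g n) _.
  apply: eqmodX_trans (hcomp _) _.
  exact/eqmodX_compl/negf0/trunc_rmulM_g.
- apply: eqmodX_trans (hcomp _) _.
  apply: eqmodX_trans (eqmodX_compl (trunc_rmulM_f n) negf0) _.
  rewrite rmorphN /= -[fps_trunc n fpsX]opprK.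
  apply: eqmodX_opp; apply: eqmodX_trans (hf n) _.
  exact: eqmodX_opp (eqmodX_sym hX).
Qed.

End PseudoInvolutionCriterion.

Lemma lucas_g0 : lucas_g 0%N = 1.
Proof. by rewrite /lucas_g /fps_div /fps_mul big_ord1 /fps_inv /= /ofseq /= invr1 mulr1. Qed.

Lemma lucas_f1 : lucas_f 1%N = 1.
Proof.
rewrite /lucas_f /fps_div /fps_mul big_ord_recr big_ord1 /= /fps_sub /=.
rewrite /fps_inv /fps_sqrt1 /= big_ord0 big_ord1 /= subrr mul0r add0r subr0 /disc /ofseq /=.
have two_neq0 : (2%:R : algC) != 0 by rewrite pnatr_eq0.
have four_neq0 : (4%:R : algC) != 0 by rewrite pnatr_eq0.
by field.
Qed.

Theorem mainTheorem11 :
  lucas_f 0%N = 0 /\ lucas_f 1%N != 0 /\ is_riordan (lucas_g, lucas_f) /\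
  pseudo_involution (lucas_g, lucas_f).
Proof.
have f1_neq0 : lucas_f 1%N != 0 by rewrite lucas_f1 oner_eq0.
have g0_neq0 : lucas_g 0%N != 0 by rewrite lucas_g0 oner_eq0.
split; first exact: lucas_f0.
split; first exact: f1_neq0.
split; first by split=> //; split; [exact: lucas_f0 | exact: f1_neq0].
apply: pseudo_involution_trunc lucas_f0 _ _.
- exact: lucas_g_involution.
- exact: lucas_f_involution.
Qed.
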